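(* With $h$ as defined in the context, $h$ is smooth (infinitely differentiable) on $(-2,\infty)$.
   Context: Let $u_n=(-1)^{s_2(n)}$, where $s_2(n)$ is the sum of the binary digits of the non-negative integer $n$ (Thue–Morse sequence with values $\pm1$). For real $x>-2$ define $h(x)=\prod_{n=1}^\infty\left(\frac{2n+x}{2n+1+x}\right)^{u_n}$ (limit of partial products; it converges and is positive). *)

From Stdlib Require Import Reals ZArith.
From Coquelicot Require Import Coquelicot.
Open Scope R_scope.

Fixpoint pos_digit_sum (p : positive) : nat :=
  match p with
  | xH => 1%nat
  | xO q => pos_digit_sum q
  | xI q => S (pos_digit_sum q)
  end.

Definition s2 (n : nat) : nat :=
  match N.of_nat n with
  | N0 => 0%nat
  | Npos p => pos_digit_sum p
  end.

Definition u (n : nat) : Z := ((-1) ^ Z.of_nat (s2 n))%Z.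

Definition factor (n : nat) (x : R) : R :=
  powerRZ ((2 * INR n + x) / (2 * INR n + 1 + x)) (u n).

Fixpoint partial_prod (N : nat) (x : R) : R :=
  match N with
  | O => 1
  | S M => partial_prod M x * factor (S M) x
  end.

Definition h (x : R) : R := Lim_seq (fun N => partial_prod N x).

From Stdlib Require Import Reals ZArith Lia Lra.
From Coquelicot Require Import Coquelicot.
Open Scope R_scope.

(* On (-2, +oo), h = exp L with L x = sum_(n >= 1) u_n (ln (2n+x) - ln (2n+1+x)).
   Since u_(2j+3) = - u_(2j+2), the k-th derivative of the pair of terms n = 2j+2, 2j+3
   is +-(f a - f (a+1) - f (a+2) + f (a+3)) with f = ln^(k) and a = 4j+4+x; by the mean
   value theorem this is at most 2 sup |ln^(k+2)| = O(j^-2), uniformly in x. So the series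
   of pairs may be differentiated termwise any number of times, L is smooth, and so is h. *)

Lemma CVU_dom_ext_in (f g : nat -> R -> R) (D : R -> Prop) :
  (forall n x, D x -> f n x = g n x) -> CVU_dom f D -> CVU_dom g D.
Proof.
  intros Hfg Hf. apply CVU_dom_cauchy. intros eps.
  destruct (proj1 (CVU_dom_cauchy f D) Hf eps) as [N HN].
  exists N. intros n m x Hx Hn Hm. rewrite <- !Hfg by exact Hx. apply HN; auto.
Qed.

Lemma CVU_dom_sum_n (b : nat -> R -> R) (M : nat -> R) (D : R -> Prop) :
  ex_series M -> (forall j x, D x -> Rabs (b j x) <= M j) ->
  CVU_dom (fun n x => sum_n (fun j => b j x) n) D.
Proof.
  intros HM Hb. apply CVU_dom_cauchy. intros eps.
  destruct (Cauchy_ex_series M HM eps) as [N HN].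
  assert (Htail : forall n m x, D x -> (m < n)%nat -> (N <= S m)%nat ->
    Rabs (sum_n (fun j => b j x) n - sum_n (fun j => b j x) m) < eps).
  { intros n m x Hx Hmn HNm.
    replace (sum_n (fun j => b j x) n - sum_n (fun j => b j x) m)
      with (sum_n_m (fun j => b j x) (S m) n) by exact (sum_n_m_sum_n _ m n ltac:(lia)).
    eapply Rle_lt_trans; [apply (norm_sum_n_m (fun j => b j x)) |].
    eapply Rle_lt_trans; [apply sum_n_m_le; intros j; apply (Hb j x Hx) |].
    eapply Rle_lt_trans; [apply Rle_abs |]. apply (HN (S m) n); lia. }
  exists N. intros n m x Hx Hn Hm.
  destruct (lt_eq_lt_dec m n) as [[Hmn | ->] | Hnm].
  - apply Htail; auto; lia.
  - rewrite Rminus_diag, Rabs_R0. apply cond_pos.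
  - rewrite Rabs_minus_sym. apply Htail; auto; lia.
Qed.

Section Smoothness.

Variable D : R -> Prop.
Hypothesis D_open : open D.

Lemma locally_of_open (P : R -> Prop) (x : R) :
  D x -> (forall y, D y -> P y) -> locally x P.
Proof. intros Hx HP. exact (filter_imp D P HP (D_open x Hx)). Qed.

Definition Cn_on (n : nat) (f : R -> R) : Prop :=
  forall k x, (k <= n)%nat -> D x -> ex_derive_n f k x.

Definition smooth_on (f : R -> R) : Prop := forall n, Cn_on n f.

Lemma Cn_on_0 (f : R -> R) : Cn_on 0 f.
Proof. intros k x Hk _. replace k with 0%nat by lia. exact I. Qed.

Lemma Cn_on_le (m n : nat) (f : R -> R) : (m <= n)%nat -> Cn_on n f -> Cn_on m f.
Proof. intros Hmn Hf k x Hk. apply Hf. lia. Qed.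

Lemma Cn_on_plus (n : nat) (f g : R -> R) :
  Cn_on n f -> Cn_on n g -> Cn_on n (fun x => f x + g x).
Proof.
  intros Hf Hg k x Hk Hx.
  apply ex_derive_n_plus; apply locally_of_open; auto; intros y Hy i Hi;
    [apply Hf | apply Hg]; auto; lia.
Qed.

Lemma Cn_on_Derive (n : nat) (f : R -> R) : Cn_on (S n) f -> Cn_on n (Derive f).
Proof.
  intros Hf [|k] x Hk Hx; [exact I |].
  apply ex_derive_ext with (Derive_n f (S k)).
  - intros t. rewrite <- Nat.add_1_r, <- (Derive_n_comp f k 1). reflexivity.
  - apply (Hf (S (S k))); auto. lia.
Qed.

Lemma Cn_on_S_of_is_derive (n : nat) (F G : R -> R) :
  (forall y, D y -> is_derive F y (G y)) -> Cn_on n G -> Cn_on (S n) F.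
Proof.
  intros HF HG.
  assert (HFG : forall k y, D y -> Derive_n F (S k) y = Derive_n G k y).
  { induction k as [|k IH]; intros y Hy.
    - apply is_derive_unique, HF, Hy.
    - apply Derive_ext_loc, locally_of_open; auto. }
  intros [|[|k]] x Hk Hx.
  - exact I.
  - exists (G x). apply HF, Hx.
  - apply ex_derive_ext_loc with (Derive_n G k).
    + apply locally_of_open; auto. intros y Hy. symmetry. apply HFG, Hy.
    + apply (HG (S k)); auto. lia.
Qed.

Lemma Cn_on_mult (n : nat) (f g : R -> R) :
  Cn_on n f -> Cn_on n g -> Cn_on n (fun x => f x * g x).
Proof.
  revert f g. induction n as [|n IH]; intros f g Hf Hg; [apply Cn_on_0 |].
  apply (Cn_on_S_of_is_derive _ _ (fun x => Derive f x * g x + f x * Derive g x)).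
  - intros y Hy. apply (is_derive_mult f g); [| | apply Rmult_comm];
      apply Derive_correct; [apply (Hf 1%nat) | apply (Hg 1%nat)]; auto; lia.
  - apply Cn_on_plus; apply IH; auto using Cn_on_Derive; apply (Cn_on_le _ (S n)); auto.
Qed.

Lemma Cn_on_exp (n : nat) (f : R -> R) : Cn_on n f -> Cn_on n (fun x => exp (f x)).
Proof.
  revert f. induction n as [|n IH]; intros f Hf; [apply Cn_on_0 |].
  apply (Cn_on_S_of_is_derive _ _ (fun x => Derive f x * exp (f x))).
  - intros y Hy. apply (is_derive_comp exp f); [apply is_derive_exp |].
    apply Derive_correct, (Hf 1%nat); auto; lia.
  - apply Cn_on_mult; [apply Cn_on_Derive, Hf |].
    apply IH, (Cn_on_le _ (S n)); auto.
Qed.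

Lemma smooth_on_chain (psi : nat -> R -> R) :
  (forall k y, D y -> is_derive (psi k) y (psi (S k) y)) -> smooth_on (psi 0%nat).
Proof.
  intros Hpsi n. revert psi Hpsi. induction n as [|n IH]; intros psi Hpsi; [apply Cn_on_0 |].
  apply (Cn_on_S_of_is_derive _ _ (psi 1%nat)); [apply Hpsi |].
  apply (IH (fun k => psi (S k))). intros k y Hy. apply Hpsi, Hy.
Qed.

Hypothesis D_connected : is_connected D.

Lemma smooth_on_Series (b : nat -> nat -> R -> R) :
  (forall k j x, D x -> is_derive (b k j) x (b (S k) j x)) ->
  (forall k, exists M, ex_series M /\ forall j x, D x -> Rabs (b k j x) <= M j) ->
  smooth_on (fun x => Series (fun j => b 0%nat j x)).
Proof.
  intros Hb HM.
  set (s k n x := sum_n (fun j => b k j x) n).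
  assert (Hs : forall k n x, D x -> is_derive (s k n) x (s (S k) n x)).
  { intros k n x Hx.
    exact (is_derive_sum_n (b k) n x (fun j => b (S k) j x) (fun j _ => Hb k j x Hx)). }
  assert (HDs : forall k n x, D x -> Derive (s k n) x = s (S k) n x).
  { intros k n x Hx. apply is_derive_unique, Hs, Hx. }
  assert (Hcvu : forall k, CVU_dom (s k) D).
  { intros k. destruct (HM k) as [M [HMs HbM]]. exact (CVU_dom_sum_n (b k) M D HMs HbM). }
  apply (smooth_on_chain (fun k x => Series (fun j => b k j x))).
  intros k x Hx.
  change (is_derive (fun y => real (Lim_seq (fun n => s k n y))) x
            (real (Lim_seq (fun n => s (S k) n x)))).
  rewrite <- (Lim_seq_ext (fun n => Derive (s k n) x)) by (intros n; apply HDs, Hx).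
  apply (CVU_Derive (s k) D D_open D_connected (Hcvu k)); auto.
  - intros n y Hy. exists (s (S k) n y). apply Hs, Hy.
  - intros n y Hy. apply continuity_pt_ext_loc with (s (S k) n).
    + apply locally_of_open; auto. intros t Ht. symmetry. apply HDs, Ht.
    + apply continuity_pt_filterlim, (@ex_derive_continuous R_AbsRing R_NormedModule).
      exists (s (S (S k)) n y). apply Hs, Hy.
  - apply (CVU_dom_ext_in (s (S k))); auto. intros n y Hy. symmetry. apply HDs, Hy.
Qed.

End Smoothness.

Lemma s2_succ_double (m : nat) : s2 (S (2 * m)) = S (s2 (2 * m)).
Proof.
  unfold s2.
  replace (N.of_nat (S (2 * m))) with (N.succ_double (N.of_nat m))
    by (rewrite N.succ_double_spec; lia).
  replace (N.of_nat (2 * m)) with (N.double (N.of_nat m)) by (rewrite N.double_spec; lia).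
  destruct (N.of_nat m); reflexivity.
Qed.

Lemma IZR_u (n : nat) : IZR (u n) = (-1) ^ s2 n.
Proof. unfold u. rewrite pow_IZR. reflexivity. Qed.

Lemma Rabs_IZR_u (n : nat) : Rabs (IZR (u n)) = 1.
Proof. rewrite IZR_u. apply pow_1_abs. Qed.

Lemma IZR_u_succ_double (m : nat) : IZR (u (S (2 * m))) = - IZR (u (2 * m)).
Proof. rewrite !IZR_u, s2_succ_double. simpl. ring. Qed.

Definition ln_deriv (k : nat) (t : R) : R :=
  match k with
  | O => ln t
  | S k => (-1) ^ k * INR (fact k) / t ^ S k
  end.

Lemma is_derive_ln_deriv (k : nat) (t : R) :
  0 < t -> is_derive (ln_deriv k) t (ln_deriv (S k) t).
Proof.
  intros Ht. destruct k as [|k].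
  - simpl. replace (1 * 1 / (t * 1)) with (/ t) by (field; lra). apply is_derive_ln, Ht.
  - assert (Htk : t ^ k <> 0) by (apply pow_nonzero; lra).
    unfold ln_deriv. auto_derive.
    + apply Rmult_integral_contrapositive. split; [lra | exact Htk].
    + replace (match k with 0%nat => 1 | S _ => INR k + 1 end) with (INR k + 1)
        by (destruct k; simpl; ring).
      change (fact (S k)) with (S k * fact k)%nat. rewrite mult_INR, S_INR.
      simpl. field. split; [exact Htk | lra].
Qed.

Lemma is_derive_ln_deriv_shift (k : nat) (c x : R) :
  0 < c + x -> is_derive (fun y => ln_deriv k (c + y)) x (ln_deriv (S k) (c + x)).
Proof.
  intros H. rewrite <- (scal_one (ln_deriv (S k) (c + x))).
  apply (is_derive_comp (ln_deriv k) (fun y => c + y)).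
  - apply is_derive_ln_deriv, H.
  - auto_derive; reflexivity.
Qed.

Lemma Rabs_ln_deriv_SS_le (k : nat) (t : R) :
  1 <= t -> Rabs (ln_deriv (S (S k)) t) <= INR (fact (S k)) / t ^ 2.
Proof.
  intros Ht. change (ln_deriv (S (S k)) t) with ((-1) ^ S k * INR (fact (S k)) / t ^ S (S k)).
  unfold Rdiv.
  assert (Hpos : 0 < t ^ 2) by (apply pow_lt; lra).
  assert (Hle : t ^ 2 <= t ^ S (S k)) by (apply Rle_pow; [lra | lia]).
  rewrite !Rabs_mult, pow_1_abs, Rmult_1_l, Rabs_pos_eq by apply pos_INR.
  rewrite Rabs_inv, Rabs_pos_eq by (apply pow_le; lra).
  apply Rmult_le_compat_l; [apply pos_INR |]. apply Rinv_le_contravar; assumption.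
Qed.

Lemma Rabs_mixed_difference_le (f f1 f2 : R -> R) (a M : R) :
  (forall t, a <= t <= a + 3 -> is_derive f t (f1 t)) ->
  (forall t, a <= t <= a + 3 -> is_derive f1 t (f2 t)) ->
  (forall t, a <= t <= a + 3 -> Rabs (f2 t) <= M) ->
  Rabs (f a - f (a + 1) - f (a + 2) + f (a + 3)) <= 2 * M.
Proof.
  intros Hf Hf1 HM.
  (* The mixed difference is g a - g (a + 1) with g t = f t - f (t + 2): apply the mean
     value theorem to g, then to f1. *)
  destruct (MVT_cor2 (fun t => f t - f (t + 2)) (fun t => f1 t - f1 (t + 2)) a (a + 1))
    as [c [Hc Hac]]; [lra | |].
  { intros t Ht. apply is_derive_Reals.
    apply (is_derive_minus f (fun t => f (t + 2))); [apply Hf; lra |].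
    rewrite <- (scal_one (f1 (t + 2))).
    apply (is_derive_comp f (fun t => t + 2)); [apply Hf; lra |].
    auto_derive; reflexivity. }
  destruct (MVT_cor2 f1 f2 c (c + 2)) as [d [Hd Hcd]]; [lra | |].
  { intros t Ht. apply is_derive_Reals, Hf1. lra. }
  replace (a + 1 + 2) with (a + 3) in Hc by ring.
  replace (f a - f (a + 1) - f (a + 2) + f (a + 3)) with (2 * f2 d) by lra.
  rewrite Rabs_mult, Rabs_pos_eq by lra.
  apply Rmult_le_compat_l; [lra |]. apply HM. lra.
Qed.

Definition log_factor_deriv (k n : nat) (x : R) : R :=
  IZR (u n) * (ln_deriv k (2 * INR n + x) - ln_deriv k (2 * INR n + 1 + x)).

Lemma factor_eq_exp (n : nat) (x : R) :
  (1 <= n)%nat -> -2 < x -> factor n x = exp (log_factor_deriv 0 n x).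
Proof.
  intros Hn Hx. assert (H1 : 1 <= INR n) by (apply (le_INR 1); exact Hn).
  unfold factor, log_factor_deriv, ln_deriv.
  rewrite powerRZ_Rpower by (apply Rdiv_lt_0_compat; lra).
  unfold Rpower. rewrite ln_div by lra. reflexivity.
Qed.

Lemma is_derive_log_factor_deriv (k n : nat) (x : R) :
  (1 <= n)%nat -> -2 < x ->
  is_derive (log_factor_deriv k n) x (log_factor_deriv (S k) n x).
Proof.
  intros Hn Hx. assert (H1 : 1 <= INR n) by (apply (le_INR 1); exact Hn).
  apply is_derive_scal, (is_derive_minus (fun y => ln_deriv k (2 * INR n + y))
                                        (fun y => ln_deriv k (2 * INR n + 1 + y)));
    apply is_derive_ln_deriv_shift; lra.
Qed.

Definition log_pair_deriv (k j : nat) (x : R) : R :=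
  log_factor_deriv k (2 * j + 2) x + log_factor_deriv k (2 * j + 3) x.

Lemma log_pair_deriv_mixed_difference (k j : nat) (x : R) :
  let a := 4 * INR j + 4 + x in
  log_pair_deriv k j x = IZR (u (2 * j + 2)) *
    (ln_deriv k a - ln_deriv k (a + 1) - ln_deriv k (a + 2) + ln_deriv k (a + 3)).
Proof.
  intros a. unfold log_pair_deriv, log_factor_deriv.
  replace (2 * j + 3)%nat with (S (2 * S j)) by lia.
  replace (2 * j + 2)%nat with (2 * S j)%nat by lia.
  assert (E0 : 2 * INR (2 * S j) = 4 * INR j + 4)
    by (rewrite mult_INR, !S_INR; simpl INR; ring).
  assert (E1 : 2 * INR (S (2 * S j)) = 4 * INR j + 6)
    by (rewrite S_INR, mult_INR, !S_INR; simpl INR; ring).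
  rewrite IZR_u_succ_double, E0, E1. fold a.
  replace (4 * INR j + 4 + 1 + x) with (a + 1) by (unfold a; ring).
  replace (4 * INR j + 6 + x) with (a + 2) by (unfold a; ring).
  replace (4 * INR j + 6 + 1 + x) with (a + 3) by (unfold a; ring).
  ring.
Qed.

Lemma Rabs_log_pair_deriv_le (k j : nat) (x : R) :
  -2 < x ->
  Rabs (log_pair_deriv k j x) <= 2 * INR (fact (S k)) / ((INR j + 1) * (INR j + 2)).
Proof.
  intros Hx. assert (Hj : 0 <= INR j) by apply pos_INR.
  rewrite (log_pair_deriv_mixed_difference k j x), Rabs_mult, Rabs_IZR_u, Rmult_1_l.
  unfold Rdiv. rewrite Rmult_assoc.
  apply Rabs_mixed_difference_le with (ln_deriv (S k)) (ln_deriv (S (S k)));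
    intros t Ht; [apply is_derive_ln_deriv; lra | apply is_derive_ln_deriv; lra |].
  eapply Rle_trans; [apply Rabs_ln_deriv_SS_le; lra |].
  apply Rmult_le_compat_l; [apply pos_INR |].
  apply Rinv_le_contravar; [nra |]. simpl. nra.
Qed.

Lemma is_lim_seq_inv_INR : is_lim_seq (fun n => / INR n) 0.
Proof. exact (is_lim_seq_inv INR p_infty is_lim_seq_INR ltac:(discriminate)). Qed.

Lemma ex_series_div_consecutive (C : R) :
  ex_series (fun j => C / ((INR j + 1) * (INR j + 2))).
Proof.
  apply (ex_series_ext (fun j => scal C (/ ((INR j + 1) * (INR j + 2))))); [reflexivity |].
  apply (@ex_series_scal_l R_AbsRing R_NormedModule). exists 1.
  assert (Hsum : forall n,
    sum_n (fun j => / ((INR j + 1) * (INR j + 2))) n = 1 - / (INR n + 2)).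
  { induction n as [|n IH].
    - rewrite sum_O. simpl. field.
    - rewrite sum_Sn, IH, S_INR. assert (0 <= INR n) by apply pos_INR.
      unfold plus; simpl. field. lra. }
  assert (Hinv : is_lim_seq (fun n => / (INR n + 2)) 0).
  { apply (is_lim_seq_ext (fun n => / INR (n + 2))).
    - intros n. rewrite plus_INR. reflexivity.
    - apply (is_lim_seq_incr_n (fun n => / INR n) 2), is_lim_seq_inv_INR. }
  change (is_lim_seq (sum_n (fun j => / ((INR j + 1) * (INR j + 2)))) 1).
  apply (is_lim_seq_ext (fun n => 1 - / (INR n + 2))); [intros n; symmetry; apply Hsum |].
  replace (Finite 1) with (Finite (1 - 0)) by (f_equal; ring).
  apply is_lim_seq_minus'; [apply is_lim_seq_const | exact Hinv].
Qed.

Definition dom_h (x : R) : Prop := -2 < x.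

Lemma dom_h_open : open dom_h.
Proof. apply open_gt. Qed.

Lemma dom_h_connected : is_connected dom_h.
Proof. intros a b x Ha _ Hx. unfold dom_h in *. lra. Qed.

Lemma smooth_on_log_factor (n : nat) :
  (1 <= n)%nat -> smooth_on dom_h (log_factor_deriv 0 n).
Proof.
  intros Hn. apply (smooth_on_chain _ dom_h_open (fun k => log_factor_deriv k n)).
  intros k y Hy. apply is_derive_log_factor_deriv; assumption.
Qed.

Lemma smooth_on_Series_log_pair :
  smooth_on dom_h (fun x => Series (fun j => log_pair_deriv 0 j x)).
Proof.
  apply (smooth_on_Series _ dom_h_open dom_h_connected).
  - intros k j x Hx. unfold log_pair_deriv.
    apply (is_derive_plus (log_factor_deriv k (2 * j + 2)) (log_factor_deriv k (2 * j + 3)));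
      apply is_derive_log_factor_deriv; auto; lia.
  - intros k. eexists. split; [apply ex_series_div_consecutive |].
    intros j x Hx. apply Rabs_log_pair_deriv_le, Hx.
Qed.

Definition log_h (x : R) : R :=
  log_factor_deriv 0 1 x + Series (fun j => log_pair_deriv 0 j x).

Lemma smooth_on_log_h : smooth_on dom_h log_h.
Proof.
  intros n. apply (Cn_on_plus _ dom_h_open).
  - apply (smooth_on_log_factor 1); lia.
  - apply smooth_on_Series_log_pair.
Qed.

Fixpoint log_partial_sum (N : nat) (x : R) : R :=
  match N with
  | O => 0
  | S M => log_partial_sum M x + log_factor_deriv 0 (S M) x
  end.

Lemma partial_prod_eq_exp (N : nat) (x : R) :
  -2 < x -> partial_prod N x = exp (log_partial_sum N x).
Proof.
  intros Hx. induction N as [|N IH]; simpl.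
  - rewrite exp_0. reflexivity.
  - rewrite IH, exp_plus, factor_eq_exp; auto. lia.
Qed.

Lemma log_partial_sum_odd (j : nat) (x : R) :
  log_partial_sum (2 * j + 3) x =
  log_factor_deriv 0 1 x + sum_n (fun i => log_pair_deriv 0 i x) j.
Proof.
  induction j as [|j IH].
  - rewrite sum_O. simpl. unfold log_pair_deriv. simpl. ring.
  - replace (2 * S j + 3)%nat with (S (S (2 * j + 3))) by lia.
    change (log_partial_sum (S (S (2 * j + 3))) x) with
      (log_partial_sum (2 * j + 3) x + log_factor_deriv 0 (S (2 * j + 3)) x
       + log_factor_deriv 0 (S (S (2 * j + 3))) x).
    rewrite sum_Sn, IH. unfold log_pair_deriv.
    replace (S (2 * j + 3)) with (2 * S j + 2)%nat by lia.
    replace (S (2 * S j + 2)) with (2 * S j + 3)%nat by lia.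
    unfold plus. simpl. ring.
Qed.

Lemma Rabs_log_factor_le (n : nat) (x : R) :
  (2 <= n)%nat -> -2 < x -> Rabs (log_factor_deriv 0 n x) <= / INR n.
Proof.
  intros Hn Hx. assert (H2 : 2 <= INR n) by (apply (le_INR 2); exact Hn).
  unfold log_factor_deriv, ln_deriv. rewrite Rabs_mult, Rabs_IZR_u, Rmult_1_l, Rabs_minus_sym.
  set (a := 2 * INR n + x).
  destruct (MVT_cor2 ln Rinv a (a + 1)) as [c [Hc Hac]]; [lra | |].
  { intros t Ht. apply derivable_pt_lim_ln. unfold a in Ht. lra. }
  replace (2 * INR n + 1 + x) with (a + 1) by (unfold a; ring).
  rewrite Hc, Rabs_pos_eq.
  - replace (a + 1 - a) with 1 by ring. rewrite Rmult_1_r.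
    apply Rinv_le_contravar; unfold a in Hac; lra.
  - replace (a + 1 - a) with 1 by ring. rewrite Rmult_1_r.
    left. apply Rinv_0_lt_compat. unfold a in Hac; lra.
Qed.

Lemma is_lim_seq_log_factor (x : R) :
  -2 < x -> is_lim_seq (fun n => log_factor_deriv 0 n x) 0.
Proof.
  intros Hx. apply is_lim_seq_abs_0.
  apply is_lim_seq_le_le_loc with (fun _ => 0) (fun n => / INR n);
    [| apply is_lim_seq_const | apply is_lim_seq_inv_INR].
  exists 2%nat. intros n Hn. split; [apply Rabs_pos | apply Rabs_log_factor_le; auto].
Qed.

Lemma is_lim_seq_even_odd (v : nat -> R) (l : Rbar) :
  is_lim_seq (fun j => v (2 * j)%nat) l -> is_lim_seq (fun j => v (S (2 * j))) l ->
  is_lim_seq v l.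
Proof.
  intros Heven Hodd P HP.
  destruct (Heven P HP) as [N1 H1], (Hodd P HP) as [N2 H2].
  exists (2 * N1 + 2 * N2)%nat. intros n Hn.
  destruct (Nat.Even_or_Odd n) as [[m ->] | [m ->]].
  - apply H1. lia.
  - rewrite Nat.add_1_r. apply H2. lia.
Qed.

Lemma is_lim_seq_log_partial_sum (x : R) :
  -2 < x -> is_lim_seq (fun N => log_partial_sum N x) (log_h x).
Proof.
  intros Hx.
  assert (Hpairs : is_lim_seq (sum_n (fun j => log_pair_deriv 0 j x))
                              (Series (fun j => log_pair_deriv 0 j x))).
  { apply Series_correct, (@ex_series_le R_AbsRing R_CompleteNormedModule _
      (fun j => 2 * INR (fact 1) / ((INR j + 1) * (INR j + 2)))).
    - intros j. apply Rabs_log_pair_deriv_le, Hx.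
    - apply ex_series_div_consecutive. }
  assert (Hodd : is_lim_seq (fun j => log_partial_sum (S (2 * j)) x) (log_h x)).
  { apply is_lim_seq_incr_1.
    apply (is_lim_seq_ext
      (fun j => log_factor_deriv 0 1 x + sum_n (fun i => log_pair_deriv 0 i x) j)).
    - intros j. rewrite <- log_partial_sum_odd. f_equal. lia.
    - apply is_lim_seq_plus'; [apply is_lim_seq_const | exact Hpairs]. }
  apply is_lim_seq_even_odd; [| exact Hodd].
  apply is_lim_seq_incr_1.
  apply (is_lim_seq_ext
    (fun j => log_partial_sum (S (2 * j)) x + log_factor_deriv 0 (S (S (2 * j))) x)).
  - intros j. replace (2 * S j)%nat with (S (S (2 * j))) by lia. reflexivity.
  - replace (Finite (log_h x)) with (Finite (log_h x + 0)) by (f_equal; ring).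
    apply is_lim_seq_plus'; [exact Hodd |].
    apply (is_lim_seq_subseq (fun n => log_factor_deriv 0 n x) 0 (fun j => S (S (2 * j)))).
    + apply eventually_subseq. intros n. lia.
    + apply is_lim_seq_log_factor, Hx.
Qed.

Lemma h_eq_exp (x : R) : -2 < x -> h x = exp (log_h x).
Proof.
  intros Hx. unfold h.
  rewrite (Lim_seq_ext _ (fun N => exp (log_partial_sum N x)))
    by (intros N; apply partial_prod_eq_exp, Hx).
  rewrite (is_lim_seq_unique _ _ (is_lim_seq_continuous exp _ _
    (derivable_continuous_pt _ _ (derivable_pt_exp _)) (is_lim_seq_log_partial_sum x Hx))).
  reflexivity.
Qed.

Theorem theorem4 : forall (k : nat) (x : R), -2 < x -> ex_derive_n h k x.
Proof.
  intros k x Hx.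
  apply ex_derive_n_ext_loc with (fun y => exp (log_h y)).
  - apply (locally_of_open dom_h dom_h_open); [exact Hx |].
    intros y Hy. symmetry. apply h_eq_exp, Hy.
  - apply (Cn_on_exp _ dom_h_open k log_h (smooth_on_log_h k)); [lia | exact Hx].
Qed.
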